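(* Let $U$ be a finite ground set partitioned as $\mathcal{P}=\{U_1,\dots,U_N\}$, let $\kappa\in\mathbb{N}$, $\vec l,\vec u\in\mathbb{N}^N$, let $\beta\in\mathbb{N}_+$, and let $\mathcal{M}_\beta$ be the $\beta$-extension of $\mathcal{M}_{fair}(\mathcal{P},\kappa,\vec l,\vec u)$. Then for any $S\in\mathcal{M}_\beta$ with $|S|=\beta\kappa$, any $T\in\mathcal{M}_{fair}(\mathcal{P},\kappa,\vec l,\vec u)$ with $|T|=\kappa$, and any ordering $S=(s_1,\dots,s_{\beta\kappa})$ of $S$, there exists a sequence $E=(e_1,\dots,e_{\beta\kappa})$ in which each element of $T$ appears exactly $\beta$ times, such that $S_i\cup\{e_{i+1}\}\in\mathcal{M}_\beta$ for all $i\in\{0,1,\dots,\beta\kappa-1\}$, where $S_i=\{s_1,\dots,s_i\}$ and $S_0=\emptyset$.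
   Context: Fairness matroid: $\mathcal{M}_{fair}(\mathcal{P},\kappa,\vec l,\vec u)=\{S\subseteq U: |S\cap U_c|\le u_c\ \forall c\in[N],\ \sum_{c\in[N]}\max\{|S\cap U_c|,l_c\}\le\kappa\}$. Its $\beta$-extension is $\mathcal{M}_\beta=\mathcal{M}_{fair}(\mathcal{P},\beta\kappa,\beta\vec l,\beta\vec u)=\{S\subseteq U: |S\cap U_c|\le\beta u_c\ \forall c,\ \sum_c\max\{|S\cap U_c|,\beta l_c\}\le\beta\kappa\}$. *)

From mathcomp Require Import all_boot.
Set Implicit Arguments. Unset Strict Implicit. Unset Printing Implicit Defensive.

(* The partition P = {U_1,...,U_N} of the finite ground set U is given by a
   colour map [col : U -> 'I_N]; U_c = [set x | col x == c]. *)
Definition part (U : finType) (N : nat) (col : U -> 'I_N) (c : 'I_N) : {set U} :=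
  [set x | col x == c].

Definition fair (U : finType) (N : nat) (col : U -> 'I_N)
    (kappa : nat) (l u : 'I_N -> nat) (S : {set U}) : bool :=
  [forall c : 'I_N, #|S :&: part col c| <= u c] &&
  (\sum_(c < N) maxn #|S :&: part col c| (l c) <= kappa).

Definition fair_ext (U : finType) (N : nat) (col : U -> 'I_N)
    (kappa : nat) (l u : 'I_N -> nat) (beta : nat) (S : {set U}) : bool :=
  fair col (beta * kappa) (fun c => beta * l c) (fun c => beta * u c) S.

From mathcomp Require Import all_boot zify.
Set Implicit Arguments. Unset Strict Implicit. Unset Printing Implicit Defensive.

(* Since |S| = beta kappa, the sum constraint of M_beta forces every colour
   class of S to reach its lower bound; hence S - a + e stays in M_beta when e
   has the colour of a, or when the class of a is strictly above its lower
   bound and the class of e strictly below its upper bound.  The beta copies of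
   T have as many elements as S, and their class sizes beta |T :&: U_c| also lie
   between the bounds, so they are at least those of S on classes of S at their
   lower bound and at most those of S on classes at their upper bound.  This
   invariant lets a greedy scan of s match every s_(i+1) with such an e_(i+1),
   and S_i + e_(i+1) is a subset of S - s_(i+1) + e_(i+1). *)

Lemma sum_nat_eqb (C : finType) (c0 : C) : \sum_(c : C) (c0 == c) = 1.
Proof. by rewrite (bigD1 c0) //= eqxx big1 // => c; rewrite eq_sym => /negbTE ->. Qed.

Lemma leq_sum_eq (I : finType) (f g : I -> nat) :
  (forall i, f i <= g i) -> \sum_i g i <= \sum_i f i -> f =1 g.
Proof.
move=> le_fg le_sum i.
have [le_sum' eq_iff] := leqif_sum (fun j (_ : true) => leqif_eq (le_fg j)).
have : \sum_j f j == \sum_j g j by rewrite eqn_leq le_sum' le_sum.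
by rewrite eq_iff => /forallP/(_ i)/eqP.
Qed.

Lemma count_flatten_nseq (T : Type) (P : pred T) m (r : seq T) :
  count P (flatten (nseq m r)) = m * count P r.
Proof. by rewrite count_flatten map_nseq sumn_nseq mulnC. Qed.

Section ColourCounts.
Variables (U : eqType) (C : finType) (col : U -> C).

Definition count_col (c : C) (r : seq U) : nat := count (fun x => col x == c) r.

Lemma sum_count_col r : \sum_(c : C) count_col c r = size r.
Proof.
elim: r => [|x r IHr]; first by rewrite big1.
by rewrite -[size _]/(1 + size r) -IHr -(sum_nat_eqb (col x)) -big_split.
Qed.

Lemma count_col_surplus r t c0 : size r = size t -> count_col c0 r < count_col c0 t ->
  exists c, count_col c t < count_col c r.
Proof.
move=> eq_size lt_c0; apply/existsP; apply: contraLR lt_c0 => /existsPn le_tr.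
have le_rt c : count_col c r <= count_col c t by rewrite leqNgt le_tr.
by rewrite (leq_sum_eq le_rt) ?ltnn // !sum_count_col eq_size.
Qed.

Lemma count_col_rem e r c : e \in r -> count_col c r = (col e == c) + count_col c (rem e r).
Proof. by move=> r_e; rewrite /count_col (permP (perm_to_rem r_e)). Qed.

Variables (lose gain : pred C).

Definition exchangeable (a e : U) : bool := (col e == col a) || lose (col a) && gain (col e).

Definition balanced (cs r : seq U) : Prop :=
  [/\ size r = size cs,
      forall c, ~~ lose c -> count_col c cs <= count_col c r
    & forall c, ~~ gain c -> count_col c r <= count_col c cs].

Lemma balanced_rem a cs r e : balanced (a :: cs) r -> e \in r ->
    col e = col a \/ count_col (col a) r = 0 /\ count_col (col e) cs < count_col (col e) r ->
  balanced cs (rem e r).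
Proof.
case=> size_r lo_r hi_r r_e exch.
have count_r c : count_col c r = (col e == c) + count_col c (rem e r) := count_col_rem c r_e.
have count_acs c : count_col c (a :: cs) = (col a == c) + count_col c cs by [].
split=> [|c /lo_r | c /hi_r]; first by rewrite size_rem // size_r.
- rewrite count_acs count_r.
  case: exch => [-> | [_ cs_e]]; first by lia.
  have [<- | _ /=] := eqVneq (col e) c; last by lia.
  by move: cs_e; rewrite count_r eqxx; lia.
- rewrite count_acs count_r.
  case: exch => [-> | [r_a _]]; first by lia.
  have [<- | _ /=] := eqVneq (col a) c; last by lia.
  by move: r_a; rewrite count_r; lia.
Qed.

Lemma balanced_step a cs r : balanced (a :: cs) r ->
  exists e, [/\ e \in r, exchangeable a e & balanced cs (rem e r)].
Proof.
move=> bal; have [has_a | no_a] := boolP (has (fun x => col x == col a) r).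
  have /hasP[e r_e /eqP same] := has_a.
  by exists e; rewrite /exchangeable same eqxx; split=> //; apply: balanced_rem (or_introl same).
(* No colour of r matches that of a, so another colour is in surplus in r. *)
have r_a : count_col (col a) r = 0 by apply/eqP; rewrite -leqn0 leqNgt -has_count.
case: (bal) => size_r lo_r hi_r.
have lose_a : lose (col a) by apply/negPn/negP => /lo_r; rewrite r_a /= eqxx.
have [|c lt_c] := count_col_surplus (c0 := col a) size_r; first by rewrite r_a /= eqxx.
have gain_c : gain c by apply/negPn/negP => /hi_r; rewrite leqNgt lt_c.
have /hasP[e r_e /eqP col_e] : has (fun x => col x == c) r.
  by rewrite has_count; exact: leq_ltn_trans (leq0n _) lt_c.
exists e; rewrite /exchangeable col_e lose_a gain_c orbT; split=> //.
apply: (balanced_rem bal r_e); right; split=> //; rewrite col_e.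
exact: leq_ltn_trans (leq_addl _ _) lt_c.
Qed.

Lemma balanced_perm_exchangeable cs r : balanced cs r ->
  exists2 E, perm_eq E r & forall x0 i, i < size cs -> exchangeable (nth x0 cs i) (nth x0 E i).
Proof.
elim: cs r => [|a cs IHcs] r bal.
  by case: bal => /size0nil -> _ _; exists [::].
have [e [r_e exch_ae /IHcs[E perm_E exch_E]]] := balanced_step bal.
exists (e :: E); first by rewrite perm_sym (permPl (perm_to_rem r_e)) perm_cons perm_sym.
by move=> x0 [|i] //= /exch_E.
Qed.

End ColourCounts.

Section FairCounts.
Variables (C : finType) (K : nat) (lo hi : C -> nat).

(* [fair col K l u A] is convertible to
   [fair_counts K l u (fun c => #|A :&: part col c|)]. *)
Definition fair_counts (n : C -> nat) : bool :=
  [forall c, n c <= hi c] && (\sum_c maxn (n c) (lo c) <= K).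

Lemma fair_counts_le m n : (forall c, m c <= n c) -> fair_counts n -> fair_counts m.
Proof.
move=> le_mn /andP[/forallP le_hi le_K]; apply/andP; split.
  by apply/forallP => c; exact: leq_trans (le_mn c) (le_hi c).
by apply: leq_trans le_K; apply: leq_sum => c _; have := le_mn c; lia.
Qed.

Lemma fair_counts_tight n : fair_counts n -> \sum_c n c = K -> forall c, lo c <= n c.
Proof.
case/andP=> _ le_K sum_n c; apply/maxn_idPl; apply/esym.
by apply: (leq_sum_eq (fun c => leq_maxl (n c) (lo c))); rewrite sum_n.
Qed.

Lemma fair_counts_exchange n m c1 c2 : fair_counts n -> \sum_c n c = K ->
    (forall c, m c + (c1 == c) <= n c + (c2 == c)) ->
    (c2 == c1) || (lo c1 < n c1) && (n c2 < hi c2) ->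
  fair_counts m.
Proof.
move=> fair_n sum_n le_mn exch; have lo_n := fair_counts_tight fair_n sum_n.
case/andP: fair_n => /forallP le_hi le_K; apply/andP; split.
  apply/forallP => c; have := le_mn c; have := le_hi c.
  case/orP: exch => [/eqP-> | /andP[_ gain2]]; first by lia.
  by case: (eqVneq c2 c) => [<- | _] /=; lia.
rewrite -(leq_add2r 1) -{1}(sum_nat_eqb c1) -big_split /= -sum_n -(sum_nat_eqb c2) -big_split /=.
apply: leq_sum => c _; have := le_mn c; have := lo_n c.
case/orP: exch => [/eqP-> | /andP[lose1 _]]; first by lia.
by case: (eqVneq c1 c) => [<- | _] /=; lia.
Qed.

End FairCounts.

Section FairSets.
Variables (U : finType) (N : nat) (col : U -> 'I_N).

Lemma card_part_seq s c : uniq s -> #|[set x in s] :&: part col c| = count_col col c s.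
Proof.
move=> uniq_s; rewrite /count_col -size_filter -(card_uniqP _) ?filter_uniq //.
by apply: eq_card => x; rewrite !inE mem_filter andbC.
Qed.

Lemma sum_card_part (A : {set U}) : \sum_c #|A :&: part col c| = #|A|.
Proof.
rewrite cardE -(sum_count_col col); apply: eq_bigr => c _.
rewrite -card_part_seq ?enum_uniq //.
by congr #|_ :&: _|; apply/setP => x; rewrite !inE mem_enum.
Qed.

Lemma fair_tight K l u (A : {set U}) :
  fair col K l u A -> #|A| = K -> forall c, l c <= #|A :&: part col c|.
Proof. by move=> fair_A card_A; apply: fair_counts_tight fair_A _; rewrite sum_card_part. Qed.

Lemma fairS K l u (A B : {set U}) : A \subset B -> fair col K l u B -> fair col K l u A.
Proof. by move=> sub_AB; apply: fair_counts_le => c; apply/subset_leq_card/setSI. Qed.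

Lemma card_part_exchange (A : {set U}) a e c : a \in A ->
  #|(A :\ a :|: [set e]) :&: part col c| + (col a == c) <= #|A :&: part col c| + (col e == c).
Proof.
move=> A_a.
have card_e : #|[set e] :&: part col c| = (col e == c).
  rewrite -[RHS]addn0 -[RHS]/(count_col col c [:: e]) -card_part_seq //.
  by congr #|_ :&: _|; apply/setP => x; rewrite !inE.
have card_Aa : #|(A :\ a) :&: part col c| + (col a == c) = #|A :&: part col c|.
  by rewrite setIDAC (cardsD1 a (A :&: part col c)) !inE A_a addnC.
by rewrite setIUl -card_Aa -card_e addnAC leq_add2r cardsU leq_subr.
Qed.

Lemma fair_exchange K l u (A : {set U}) a e : fair col K l u A -> #|A| = K -> a \in A ->
    (col e == col a)
      || (l (col a) < #|A :&: part col (col a)|) && (#|A :&: part col (col e)| < u (col e)) ->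
  fair col K l u (A :\ a :|: [set e]).
Proof.
move=> fair_A card_A A_a exch; apply: fair_counts_exchange fair_A _ _ exch.
  by rewrite sum_card_part.
by move=> c; apply: card_part_exchange.
Qed.

Lemma prefix_subset_setD1 n (s : n.-tuple U) (i : 'I_n) : uniq s ->
  [set tnth s j | j : 'I_n & j < i] \subset [set x in s] :\ tnth s i.
Proof.
move=> /tuple_uniqP inj_s; apply/subsetP => _ /imsetP[j lt_ji ->].
rewrite !inE mem_tnth andbT; apply: contraTneq lt_ji => /inj_s ->.
by rewrite inE ltnn.
Qed.

Lemma balanced_repeat beta K l u (T : {set U}) (s : seq U) :
    fair col K l u T -> #|T| = K -> size s = beta * K ->
  balanced col (fun c => beta * l c < count_col col c s)
    (fun c => count_col col c s < beta * u c) s (flatten (nseq beta (enum T))).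
Proof.
move=> fair_T card_T size_s.
have count_R c : count_col col c (flatten (nseq beta (enum T))) = beta * #|T :&: part col c|.
  rewrite /count_col count_flatten_nseq -/(count_col col c _).
  by rewrite -card_part_seq ?enum_uniq // set_enum.
split=> [|c|c]; rewrite ?count_R -?leqNgt.
- by rewrite -count_predT count_flatten_nseq count_predT -cardE card_T size_s.
- by move/leq_trans; apply; rewrite leq_mul2l (fair_tight fair_T card_T) orbT.
- case/andP: fair_T => /forallP hi_T _; apply: leq_trans.
  by rewrite leq_mul2l hi_T orbT.
Qed.

End FairSets.

Theorem lemma2 (U : finType) (N : nat) (col : U -> 'I_N)
    (Hpart : forall c : 'I_N, exists x : U, col x = c)
    (kappa : nat) (l u : 'I_N -> nat) (beta : nat) (Hbeta : 0 < beta)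
    (S T : {set U})
    (HS : fair_ext col kappa l u beta S) (HSsz : #|S| = beta * kappa)
    (HT : fair col kappa l u T) (HTsz : #|T| = kappa)
    (s : (beta * kappa).-tuple U)
    (Hs_uniq : uniq s) (Hs_S : [set x in s] = S) :
  exists E : (beta * kappa).-tuple U,
    (forall x, x \in T -> count_mem x E = beta) /\
    (forall i : 'I_(beta * kappa),
       fair_ext col kappa l u beta
         ([set tnth s j | j : 'I_(beta * kappa) & (j < i)%N] :|: [set tnth E i])).
Proof.
rewrite /fair_ext in HS *.
have bal := balanced_repeat HT HTsz (size_tuple s).
have [E perm_E exch_E] := balanced_perm_exchangeable bal.
have size_E : size E == beta * kappa.
  by case: bal => size_R _ _; rewrite (perm_size perm_E) size_R size_tuple.
exists (Tuple size_E); split.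
  move=> x T_x; rewrite /= (permP perm_E) count_flatten_nseq count_uniq_mem ?enum_uniq //.
  by rewrite mem_enum T_x muln1.
move=> i; apply: fairS (setSU _ (prefix_subset_setD1 i Hs_uniq)) _.
have S_si : tnth s i \in S by rewrite -Hs_S inE mem_tnth.
rewrite Hs_S; apply: (fair_exchange HS HSsz S_si).
have cardS c : #|S :&: part col c| = count_col col c s by rewrite -Hs_S card_part_seq.
have x0 : U := tnth s i.
by rewrite !cardS !(tnth_nth x0); apply: exch_E; rewrite size_tuple.
Qed.
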